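(* Let $n\geq 3$ be an integer, let $\varphi : X \to X$ be a morphism in $\mathscr{C}$, and let $\kappa : K \to X$ be a kernel of $\varphi$. Then $\varphi$ has a core inverse if and only if $\varphi$ has a cokernel $\lambda : X \to L$ such that both $\kappa\lambda : K\to L$ and $\varphi^{*}\varphi^{n}+\kappa^{*}\kappa : X\to X$ are invertible. In this case $$\varphi^{\mathrm{core}}=\varphi^{n-1}(\varphi^{*}\varphi^{n}+\kappa^{*}\kappa)^{-1}\varphi^{*}.$$
   Context: $\mathscr{C}$ is an additive category with an involution $*$: a map on morphisms sending $\varphi : X\to Y$ to $\varphi^* : Y \to X$ such that $(\varphi^* )^*=\varphi$, $(\varphi\psi)^*=\psi^*\varphi^*$ and $(\varphi+\phi)^*=\varphi^*+\phi^*$. Composition is written left to right: for $\varphi : X\to Y$ and $\psi : Y\to Z$, $\varphi\psi : X \to Z$ means ''first $\varphi$, then $\psi$''. A kernel of $\varphi : X\to Y$ is a morphism $\kappa : K\to X$ with $\kappa\varphi=0$ such that every $\alpha : M\to X$ with $\alpha\varphi=0$ factors uniquely as $\alpha=\alpha'\kappa$. A cokernel of $\varphi$ is a morphism $\lambda : Y\to L$ with $\varphi\lambda=0$ such that every $\beta : Y\to M$ with $\varphi\beta=0$ factors uniquely as $\beta=\lambda\beta'$. A morphism is invertible if it has a two-sided inverse. For $\varphi : X\to X$, a core inverse of $\varphi$ is a morphism $\chi : X\to X$ with $(\varphi\chi)^*=\varphi\chi$, $\varphi\chi^2=\chi$ and $\chi\varphi^2=\varphi$. It is unique when it exists and is denoted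 $\varphi^{\mathrm{core}}$. *)

From HB Require Import structures.
From mathcomp Require Import all_boot all_algebra.
Set Implicit Arguments. Unset Strict Implicit. Unset Printing Implicit Defensive.
Import GRing.Theory.
Local Open Scope ring_scope.

(* An additive category with an involution.  Composition is written
   left to right: [mcomp f g] means "first f, then g". *)
Record AddInvCat := {
  Ob :> Type;
  Mor : Ob -> Ob -> zmodType;
  midm : forall X : Ob, Mor X X;
  mcomp : forall X Y Z : Ob, Mor X Y -> Mor Y Z -> Mor X Z;
  mstar : forall X Y : Ob, Mor X Y -> Mor Y X;
  compA : forall (X Y Z W : Ob) (f : Mor X Y) (g : Mor Y Z) (h : Mor Z W),
      mcomp f (mcomp g h) = mcomp (mcomp f g) h;
  comp1m : forall (X Y : Ob) (f : Mor X Y), mcomp (midm X) f = f;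
  compm1 : forall (X Y : Ob) (f : Mor X Y), mcomp f (midm Y) = f;
  compDl : forall (X Y Z : Ob) (f f' : Mor X Y) (g : Mor Y Z),
      mcomp (f + f') g = mcomp f g + mcomp f' g;
  compDr : forall (X Y Z : Ob) (f : Mor X Y) (g g' : Mor Y Z),
      mcomp f (g + g') = mcomp f g + mcomp f g';
  zero_obj : exists Z : Ob, forall X : Ob,
      (forall f g : Mor Z X, f = g) /\ (forall f g : Mor X Z, f = g);
  biprod : forall X Y : Ob, exists (P : Ob) (i1 : Mor X P) (i2 : Mor Y P)
      (p1 : Mor P X) (p2 : Mor P Y),
      [/\ mcomp i1 p1 = midm X, mcomp i2 p2 = midm Y, mcomp i1 p2 = 0,
          mcomp i2 p1 = 0 & mcomp p1 i1 + mcomp p2 i2 = midm P];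
  starK : forall (X Y : Ob) (f : Mor X Y), mstar (mstar f) = f;
  starM : forall (X Y Z : Ob) (f : Mor X Y) (g : Mor Y Z),
      mstar (mcomp f g) = mcomp (mstar g) (mstar f);
  starD : forall (X Y : Ob) (f g : Mor X Y), mstar (f + g) = mstar f + mstar g
}.

Arguments midm {_} X.
Arguments mcomp {_ X Y Z}.
Arguments mstar {_ X Y}.

Section Defs.
Variable C : AddInvCat.

Definition is_kernel (X Y K : C) (phi : Mor X Y) (kappa : Mor K X) : Prop :=
  mcomp kappa phi = 0 /\
  forall (M : C) (alpha : Mor M X), mcomp alpha phi = 0 ->
    exists! alpha' : Mor M K, alpha = mcomp alpha' kappa.

Definition is_cokernel (X Y L : C) (phi : Mor X Y) (lambda : Mor Y L) : Prop :=
  mcomp phi lambda = 0 /\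
  forall (M : C) (beta : Mor Y M), mcomp phi beta = 0 ->
    exists! beta' : Mor L M, beta = mcomp lambda beta'.

Definition is_inverse (X Y : C) (f : Mor X Y) (g : Mor Y X) : Prop :=
  mcomp f g = midm X /\ mcomp g f = midm Y.

Definition invertible (X Y : C) (f : Mor X Y) : Prop :=
  exists g : Mor Y X, is_inverse f g.

Fixpoint powm (X : C) (f : Mor X X) (n : nat) : Mor X X :=
  match n with
  | O => midm X
  | S k => mcomp f (powm f k)
  end.

Definition core_inverse (X : C) (phi chi : Mor X X) : Prop :=
  [/\ mstar (mcomp phi chi) = mcomp phi chi,
      mcomp phi (mcomp chi chi) = chi &
      mcomp chi (mcomp phi phi) = phi].

End Defs.

From Pilot Require Import Defs.
From HB Require Import structures.
From mathcomp Require Import all_boot all_algebra.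
Import GRing.Theory.
Local Open Scope ring_scope.

(* If chi is the core inverse of phi, the kernel property splits the
   idempotent 1 - chi phi as v kappa with kappa v = 1 (products read left to
   right).  This v is a cokernel of phi, and chi^n chi^* + v v^* is a two-sided
   inverse of phi^* phi^n + kappa^* kappa; composing it with phi^(n-1) on the
   left and phi^* on the right gives back chi.
   Conversely, let psi be that inverse and w a right inverse of kappa lambda.
   Composing psi (phi^* phi^n + kappa^* kappa) = 1, and its adjoint, with
   lambda shows that psi phi^* phi^n and psi^* (phi^n)^* phi both equal
   1 - lambda w kappa.  Then p := phi^n psi phi^* satisfies p^* phi = phi, so
   p = p^* p is hermitian and fixes phi, and phi^(n-1) psi phi^* is a core
   inverse of phi as soon as n >= 2. *)

Local Notation "f ⊙ g" := (mcomp f g) (at level 40, left associativity).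

Section AddInvCatTheory.
Context {C : AddInvCat}.

Lemma comp0l {X Y Z : C} (g : Mor Y Z) : (0 : Mor X Y) ⊙ g = 0.
Proof. by apply: (addrI (0 ⊙ g)); rewrite -compDl !addr0. Qed.

Lemma comp0r {X Y Z : C} (f : Mor X Y) : f ⊙ (0 : Mor Y Z) = 0.
Proof. by apply: (addrI (f ⊙ 0)); rewrite -compDr !addr0. Qed.

Lemma compNl {X Y Z : C} (f : Mor X Y) (g : Mor Y Z) : (- f) ⊙ g = - (f ⊙ g).
Proof. by apply: (addrI (f ⊙ g)); rewrite -compDl !subrr comp0l. Qed.

Lemma compNr {X Y Z : C} (f : Mor X Y) (g : Mor Y Z) : f ⊙ (- g) = - (f ⊙ g).
Proof. by apply: (addrI (f ⊙ g)); rewrite -compDr !subrr comp0r. Qed.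

Lemma compBl {X Y Z : C} (f f' : Mor X Y) (g : Mor Y Z) :
  (f - f') ⊙ g = f ⊙ g - f' ⊙ g.
Proof. by rewrite compDl compNl. Qed.

Lemma compBr {X Y Z : C} (f : Mor X Y) (g g' : Mor Y Z) :
  f ⊙ (g - g') = f ⊙ g - f ⊙ g'.
Proof. by rewrite compDr compNr. Qed.

Lemma star0 {X Y : C} : mstar (0 : Mor X Y) = 0.
Proof. by apply: (addrI (mstar (0 : Mor X Y))); rewrite -starD !addr0. Qed.

Lemma star1 (X : C) : mstar (midm X) = midm X.
Proof. by rewrite -[LHS]compm1 -[m in _ ⊙ m]starK -starM compm1 starK. Qed.

Lemma star_idem_self {X : C} (a : Mor X X) : mstar a ⊙ a = a -> mstar a = a.
Proof. by move=> idem_a; rewrite -{1}idem_a starM starK idem_a. Qed.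

Lemma is_inverse_uniq {X Y : C} {f : Mor X Y} {g g' : Mor Y X} :
  is_inverse f g -> is_inverse f g' -> g = g'.
Proof.
by move=> [_ gf] [fg' _]; rewrite -[g]compm1 -fg' Defs.compA gf comp1m.
Qed.

Lemma powmSr {X : C} (f : Mor X X) k : powm f k.+1 = powm f k ⊙ f.
Proof.
elim: k => [|k IHk]; first by rewrite /= compm1 comp1m.
by rewrite [in RHS]/= -Defs.compA -IHk.
Qed.

Lemma powm_absorb {X : C} {a b : Mor X X} k :
  a ⊙ (b ⊙ b) = b -> powm a k ⊙ powm b k.+1 = b.
Proof.
move=> abb; elim: k => [|k IHk]; first by rewrite /= comp1m compm1.
rewrite powmSr -Defs.compA.
have -> : a ⊙ powm b k.+2 = powm b k.+1.
  by rewrite /= [b ⊙ (b ⊙ _)]Defs.compA Defs.compA abb.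
exact: IHk.
Qed.

Lemma powmS_absorb {X : C} {a b : Mor X X} k :
  a ⊙ (b ⊙ b) = b -> powm a k.+1 ⊙ powm b k.+1 = a ⊙ b.
Proof. by move=> abb; rewrite [powm a _]/= -Defs.compA powm_absorb. Qed.

Lemma powmS_left_fixed {X : C} {p f : Mor X X} k :
  p ⊙ f = f -> p ⊙ powm f k.+1 = powm f k.+1.
Proof. by move=> pf; rewrite [powm f _]/= Defs.compA pf. Qed.

Lemma kernel_section {X Y K : C} {phi : Mor X Y} {kappa : Mor K X}
    {s : Mor X X} :
  is_kernel phi kappa -> s ⊙ phi = 0 -> kappa ⊙ s = kappa ->
  exists t : Mor X K, t ⊙ kappa = s /\ kappa ⊙ t = midm K.
Proof.
move=> [kphi0 univ] sphi0 ks.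
have [t [st _]] := univ X s sphi0.
exists t; split; first by rewrite st.
have [t0 [_ uniq_kappa]] := univ K kappa kphi0.
rewrite -(uniq_kappa (midm K)) ?comp1m //; apply/esym/uniq_kappa.
by rewrite -Defs.compA -st ks.
Qed.

Lemma section_is_cokernel {X Y K : C} {phi : Mor X Y} {chi : Mor Y X}
    {kappa : Mor K Y} {v : Mor Y K} :
  phi ⊙ chi ⊙ phi = phi -> v ⊙ kappa = midm Y - chi ⊙ phi ->
  kappa ⊙ v = midm K -> is_cokernel phi v.
Proof.
move=> pcp vk kv; split.
  rewrite -[v]compm1 -kv [v ⊙ _]Defs.compA vk Defs.compA compBr compm1.
  by rewrite Defs.compA pcp subrr comp0l.
move=> M beta pb0; exists (kappa ⊙ beta); split.
  by rewrite Defs.compA vk compBl comp1m -Defs.compA pb0 comp0r subr0.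
by move=> b' ->; rewrite Defs.compA kv comp1m.
Qed.

Lemma left_inverse_kernel_summand {X Z K L : C} (phi : Mor Z X)
    (kappa : Mor K X) (lambda : Mor X L) (w : Mor L K) (rho : Mor X X)
    (beta : Mor X Z) :
  phi ⊙ lambda = 0 -> kappa ⊙ lambda ⊙ w = midm K ->
  rho ⊙ (beta ⊙ phi + mstar kappa ⊙ kappa) = midm X ->
  rho ⊙ beta ⊙ phi = midm X - lambda ⊙ w ⊙ kappa.
Proof.
move=> pl0 klw rhoA.
(* post-composing with lambda kills the first summand *)
have rk : rho ⊙ mstar kappa = lambda ⊙ w.
  have rkl : rho ⊙ mstar kappa ⊙ kappa ⊙ lambda = lambda.
    have := congr1 (mcomp^~ lambda) rhoA.
    by rewrite /= comp1m compDr compDl -!Defs.compA pl0 !comp0r add0r.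
  by rewrite -[LHS]compm1 -klw !Defs.compA rkl.
by rewrite -rhoA compDr !Defs.compA rk addrK.
Qed.

Section CoreInverse.
Context {X K : C} {phi chi : Mor X X} {kappa : Mor K X}.
Hypothesis hchi : core_inverse phi chi.

Lemma phi_core_phi : phi ⊙ chi ⊙ phi = phi.
Proof.
case: hchi => _ pcc cpp.
by rewrite -{2}cpp !Defs.compA -(Defs.compA phi) pcc -Defs.compA cpp.
Qed.

Lemma core_phi_core : chi ⊙ phi ⊙ chi = chi.
Proof.
case: hchi => _ pcc cpp.
by rewrite -{2}pcc !Defs.compA -(Defs.compA chi) cpp -Defs.compA pcc.
Qed.

Hypothesis kphi0 : kappa ⊙ phi = 0.

Lemma kernel_comp_core : kappa ⊙ chi = 0.
Proof. by case: hchi => _ pcc _; rewrite -pcc Defs.compA kphi0 comp0l. Qed.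

Lemma core_kernel_section : is_kernel phi kappa ->
  exists v : Mor X K, v ⊙ kappa = midm X - chi ⊙ phi /\ kappa ⊙ v = midm K.
Proof.
case: hchi => _ _ cpp hk; apply: kernel_section hk _ _.
  by rewrite compBl comp1m -Defs.compA cpp subrr.
by rewrite compBr compm1 Defs.compA kernel_comp_core comp0l subr0.
Qed.

Context {v : Mor X K}.
Hypotheses (vk : v ⊙ kappa = midm X - chi ⊙ phi) (kv : kappa ⊙ v = midm K).

Lemma phi_comp_section : phi ⊙ v = 0.
Proof. by case: (section_is_cokernel phi_core_phi vk kv). Qed.

Lemma is_inverse_core_sum k :
  is_inverse (mstar phi ⊙ powm phi k.+1 + mstar kappa ⊙ kappa)
             (powm chi k.+1 ⊙ mstar chi + v ⊙ mstar v).
Proof.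
case: hchi => herm pcc cpp.
set psi0 := _ + v ⊙ mstar v.
split.
- have phin_psi0 : powm phi k.+1 ⊙ psi0 = phi ⊙ chi ⊙ mstar chi.
    have phin_v : powm phi k.+1 ⊙ v = 0.
      by rewrite powmSr -Defs.compA phi_comp_section comp0r.
    rewrite /psi0 compDr (Defs.compA _ (powm chi k.+1)) (powmS_absorb k pcc).
    by rewrite (Defs.compA _ v) phin_v comp0l addr0.
  have kappa_psi0 : kappa ⊙ psi0 = mstar v.
    have kappa_chin : kappa ⊙ powm chi k.+1 = 0.
      by rewrite [powm chi _]/= Defs.compA kernel_comp_core comp0l.
    rewrite /psi0 compDr (Defs.compA _ (powm chi _)) kappa_chin.
    by rewrite (Defs.compA _ v) kv comp0l comp1m add0r.
  rewrite compDl -(Defs.compA (mstar phi)) -(Defs.compA (mstar kappa)).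
  rewrite phin_psi0 kappa_psi0 -herm -!starM -starD.
  by rewrite !Defs.compA core_phi_core vk addrC subrK star1.
- have chis_A : mstar chi ⊙ (mstar phi ⊙ powm phi k.+1 + mstar kappa ⊙ kappa)
                = powm phi k.+1.
    rewrite compDr (Defs.compA (mstar chi)).
    rewrite (Defs.compA (mstar chi) (mstar kappa)).
    rewrite -!starM herm kernel_comp_core star0 comp0l addr0.
    exact: powmS_left_fixed phi_core_phi.
  have vs_A : mstar v ⊙ (mstar phi ⊙ powm phi k.+1 + mstar kappa ⊙ kappa)
              = kappa.
    rewrite compDr (Defs.compA (mstar v)) (Defs.compA (mstar v) (mstar kappa)).
    rewrite -!starM phi_comp_section kv star0 star1.
    by rewrite comp0l comp1m add0r.
  rewrite compDl -(Defs.compA (powm chi _)) -(Defs.compA v) chis_A vs_A.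
  by rewrite (powmS_absorb k cpp) vk addrC subrK.
Qed.

Lemma core_inverse_formula k :
  chi = powm phi k ⊙ ((powm chi k.+1 ⊙ mstar chi + v ⊙ mstar v) ⊙ mstar phi).
Proof.
case: hchi => herm pcc _.
rewrite compDl -(Defs.compA (powm chi _)) -(Defs.compA v) -!starM herm.
rewrite phi_comp_section star0 comp0r addr0.
rewrite (Defs.compA (powm phi k)) (powm_absorb k pcc).
by rewrite Defs.compA core_phi_core.
Qed.

End CoreInverse.

Lemma core_inverse_of_cokernel {X K L : C} {phi : Mor X X} {kappa : Mor K X}
    {lambda : Mor X L} {w : Mor L K} {psi : Mor X X} k :
  kappa ⊙ phi = 0 -> phi ⊙ lambda = 0 -> kappa ⊙ lambda ⊙ w = midm K ->
  is_inverse (mstar phi ⊙ powm phi k.+2 + mstar kappa ⊙ kappa) psi ->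
  core_inverse phi (powm phi k.+1 ⊙ (psi ⊙ mstar phi)).
Proof.
move=> kphi0 phil0 klw [A_psi psi_A].
set chi := powm phi k.+1 ⊙ _.
set E := midm X - lambda ⊙ w ⊙ kappa.
have psi_A_phi : psi ⊙ (mstar phi ⊙ powm phi k.+1) ⊙ phi = E.
  apply: left_inverse_kernel_summand phil0 klw _.
  by rewrite -(Defs.compA (mstar phi)) -powmSr.
have psis_As_phi : mstar psi ⊙ mstar (powm phi k.+2) ⊙ phi = E.
  apply: left_inverse_kernel_summand phil0 klw _.
  move: (congr1 mstar A_psi).
  by rewrite star1 starM starD (starM (mstar phi)) (starM (mstar kappa)) !starK.
have star_phichi_phi : mstar (phi ⊙ chi) ⊙ phi = phi.
  have -> : phi ⊙ chi = powm phi k.+2 ⊙ (psi ⊙ mstar phi).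
    by rewrite /chi Defs.compA.
  rewrite (starM (powm phi _)) (starM psi) starK.
  rewrite -!Defs.compA (Defs.compA (mstar psi)) psis_As_phi /E compBr compm1.
  by rewrite !Defs.compA phil0 !comp0l subr0.
have herm : mstar (phi ⊙ chi) = phi ⊙ chi.
  by apply: star_idem_self; rewrite Defs.compA star_phichi_phi.
have pcp : phi ⊙ chi ⊙ phi = phi by rewrite -herm star_phichi_phi.
have kchi : kappa ⊙ chi = 0.
  by rewrite /chi [powm phi _]/= !Defs.compA kphi0 !comp0l.
have E_chi : E ⊙ chi = chi.
  by rewrite compBl comp1m -Defs.compA kchi comp0r subr0.
have chi_phi : chi ⊙ phi = E.
  move: (psi ⊙ _) psi_A_phi => B B_phi.
  rewrite -{1}E_chi -{1}B_phi -(Defs.compA (B ⊙ phi)) -(Defs.compA B).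
  by rewrite (Defs.compA phi chi) pcp.
split => //.
  by rewrite Defs.compA {2}/chi Defs.compA (powmS_left_fixed k pcp).
by rewrite Defs.compA chi_phi compBl comp1m -Defs.compA kphi0 comp0r subr0.
Qed.

End AddInvCatTheory.

Theorem mainTheorem3 (C : AddInvCat) (n : nat) (hn : (3 <= n)%N)
    (X K : C) (phi : Mor X X) (kappa : Mor K X) (hk : is_kernel phi kappa) :
  ((exists chi : Mor X X, core_inverse phi chi) <->
   (exists (L : C) (lambda : Mor X L),
      [/\ is_cokernel phi lambda,
          invertible (mcomp kappa lambda) &
          invertible (mcomp (mstar phi) (powm phi n) + mcomp (mstar kappa) kappa)]))
  /\
  (forall (chi psi : Mor X X), core_inverse phi chi ->
     is_inverse (mcomp (mstar phi) (powm phi n) + mcomp (mstar kappa) kappa) psi ->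
     chi = mcomp (powm phi (n - 1)) (mcomp psi (mstar phi))).
Proof.
case: n hn => [|[|m]] // _; rewrite subSS subn0.
have kphi0 : kappa ⊙ phi = 0 by case: hk.
split; first split.
- case=> chi hchi.
  have [v [vk kv]] := core_kernel_section hchi kphi0 hk.
  exists K, v; split.
  + exact: section_is_cokernel (phi_core_phi hchi) vk kv.
  + by exists (midm K); rewrite kv; split; exact: comp1m.
  + exact: ex_intro _ _ (is_inverse_core_sum hchi kphi0 vk kv m.+1).
- case=> L [lambda [[phil0 _] [w [klw _]] [psi hpsi]]].
  exact: ex_intro _ _ (core_inverse_of_cokernel m kphi0 phil0 klw hpsi).
- move=> chi psi hchi hpsi.
  have [v [vk kv]] := core_kernel_section hchi kphi0 hk.
  rewrite (is_inverse_uniq hpsi (is_inverse_core_sum hchi kphi0 vk kv m.+1)).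
  by rewrite -(core_inverse_formula hchi vk kv m.+1).
Qed.
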